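(* Let $G=(V,E)$ be a path on $n\ge1$ vertices and let $\{A_v\}_{v\in V}$ be events in a probability space. Then \[ \Pr\Big(\bigcup_{v\in V} A_v\Big) \;\ge\; \frac{1}{\lceil n/2\rceil}\Big(\sum_{v\in V}\Pr(A_v) - \sum_{\{v,w\}\in E}\Pr(A_v\cap A_w)\Big). \] *)

From Stdlib Require Import Reals Lra Lia.
Open Scope R_scope.

Record prob_space := {
  Omega : Type;
  measurable : (Omega -> Prop) -> Prop;
  measurable_full : measurable (fun _ => True);
  measurable_compl : forall A, measurable A -> measurable (fun x => ~ A x);
  measurable_cunion : forall A : nat -> (Omega -> Prop),
      (forall i, measurable (A i)) -> measurable (fun x => exists i, A i x);
  Pr : (Omega -> Prop) -> R;
  Pr_nonneg : forall A, measurable A -> 0 <= Pr A;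
  Pr_full : Pr (fun _ => True) = 1;
  Pr_sigma_additive : forall A : nat -> (Omega -> Prop),
      (forall i, measurable (A i)) ->
      (forall i j, i <> j -> forall x, A i x -> A j x -> False) ->
      infinite_sum (fun i => Pr (A i)) (Pr (fun x => exists i, A i x))
}.

Definition path_vertex (n i : nat) : Prop := (i < n)%nat.
Definition path_edge (n i j : nat) : Prop := (i < n)%nat /\ j = S i /\ (j < n)%nat.

Fixpoint sum_lt (m : nat) (f : nat -> R) : R :=
  match m with
  | O => 0
  | S k => sum_lt k f + f k
  end.

(* Put B_0 = A_0 and B_(i+1) = A_(i+1) \ A_i.  Then
   Pr(A_(i+1)) - Pr(A_i /\ A_(i+1)) = Pr(B_(i+1)), so the right-hand bracket is
   the sum of the Pr(B_i).  Consecutive B_i, B_(i+1) are disjoint subsets of the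
   union, hence Pr(B_i) + Pr(B_(i+1)) <= Pr(union); grouping the n terms into
   ceil(n/2) consecutive pairs (the last possibly a singleton) gives the bound. *)

From Stdlib Require Import Reals Lra Lia Classical FunctionalExtensionality
  PropExtensionality.
Open Scope R_scope.

Lemma pred_ext (T : Type) (X Y : T -> Prop) : (forall x, X x <-> Y x) -> X = Y.
Proof.
  intro H. apply functional_extensionality. intro x.
  apply propositional_extensionality. apply H.
Qed.

Lemma infinite_sum_const_eq0 (c l : R) : infinite_sum (fun _ => c) l -> c = 0.
Proof.
  intro H. destruct (Req_dec c 0) as [|Hc]; [assumption | exfalso].
  assert (Heps : Rabs c / 2 > 0) by (apply Rabs_pos_lt in Hc; lra).
  destruct (H _ Heps) as [N HN].
  assert (H1 := HN N (Nat.le_refl N)).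
  assert (H2 := HN (S N) (Nat.le_succ_diag_r N)).
  unfold R_dist in H1, H2. simpl sum_f_R0 in H2.
  assert (Rabs c <= Rabs (sum_f_R0 (fun _ => c) N + c - l)
                    + Rabs (sum_f_R0 (fun _ => c) N - l)).
  { replace c with ((sum_f_R0 (fun _ => c) N + c - l)
                    - (sum_f_R0 (fun _ => c) N - l)) at 1 by ring.
    eapply Rle_trans; [apply Rabs_triang | rewrite Rabs_Ropp; lra]. }
  lra.
Qed.

Lemma infinite_sum_eventually_const (f : nat -> R) (k l : R) (N : nat) :
  (forall m, (N <= m)%nat -> sum_f_R0 f m = k) -> infinite_sum f l -> l = k.
Proof.
  intros Hk Hl. apply (uniqueness_sum f); [assumption |].
  intros eps Heps. exists N. intros m Hm.
  rewrite Hk by assumption. unfold R_dist. rewrite Rminus_diag, Rabs_R0. lra.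
Qed.

Section ProbabilityLemmas.
Variable P : prob_space.

(* The sequence X, Y, {}, {}, ... through which finite unions and finite
   additivity are obtained from the countable axioms. *)
Definition two_events (X Y : Omega P -> Prop) (i : nat) : Omega P -> Prop :=
  match i with 0 => X | 1 => Y | _ => fun _ => False end.

Lemma two_events_union (X Y : Omega P -> Prop) :
  (fun x => exists i, two_events X Y i x) = (fun x => X x \/ Y x).
Proof.
  apply pred_ext. intro x. split.
  - intros [[|[|i]] Hi]; simpl in Hi; tauto.
  - intros [Hx | Hx]; [exists 0%nat | exists 1%nat]; exact Hx.
Qed.

Lemma measurable_empty : measurable P (fun _ => False).
Proof.
  replace (fun _ : Omega P => False) with (fun x : Omega P => ~ True)
    by (apply pred_ext; tauto).
  apply measurable_compl, measurable_full.
Qed.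

Lemma measurable_two_events X Y :
  measurable P X -> measurable P Y -> forall i, measurable P (two_events X Y i).
Proof. intros HX HY [|[|i]]; simpl; auto using measurable_empty. Qed.

Lemma measurable_or X Y :
  measurable P X -> measurable P Y -> measurable P (fun x => X x \/ Y x).
Proof.
  intros HX HY. rewrite <- two_events_union.
  apply measurable_cunion, measurable_two_events; assumption.
Qed.

Lemma measurable_and X Y :
  measurable P X -> measurable P Y -> measurable P (fun x => X x /\ Y x).
Proof.
  intros HX HY.
  replace (fun x => X x /\ Y x) with (fun x => ~ (~ X x \/ ~ Y x)).
  - apply measurable_compl, measurable_or; apply measurable_compl; assumption.
  - apply pred_ext. intro x. destruct (classic (X x)), (classic (Y x)); tauto.
Qed.

Lemma measurable_diff X Y :
  measurable P X -> measurable P Y -> measurable P (fun x => X x /\ ~ Y x).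
Proof. intros HX HY. apply measurable_and, measurable_compl; assumption. Qed.

Lemma Pr_empty : Pr P (fun _ => False) = 0.
Proof.
  apply (infinite_sum_const_eq0 _ (Pr P (fun x => exists _ : nat, False))).
  apply (Pr_sigma_additive P (fun _ _ => False)).
  - intro. apply measurable_empty.
  - intros i j _ x [].
Qed.

Lemma Pr_disjoint_or X Y : measurable P X -> measurable P Y ->
  (forall x, X x -> Y x -> False) ->
  Pr P (fun x => X x \/ Y x) = Pr P X + Pr P Y.
Proof.
  intros HX HY Hdisj.
  apply (infinite_sum_eventually_const (fun i => Pr P (two_events X Y i)) _ _ 1).
  - intros [|m] Hm; [lia |]. clear Hm.
    induction m as [|m IH]; [simpl; ring |].
    simpl sum_f_R0 in *. rewrite IH. simpl. rewrite Pr_empty. ring.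
  - rewrite <- two_events_union.
    apply Pr_sigma_additive; [apply measurable_two_events; assumption |].
    intros [|[|i]] [|[|j]] Hij x Hi Hj; simpl in *; eauto; lia.
Qed.

Lemma Pr_split X Y : measurable P X -> measurable P Y ->
  Pr P X = Pr P (fun x => Y x /\ X x) + Pr P (fun x => X x /\ ~ Y x).
Proof.
  intros HX HY. rewrite <- Pr_disjoint_or.
  - f_equal. apply pred_ext. intro x. destruct (classic (Y x)); tauto.
  - apply measurable_and; assumption.
  - apply measurable_diff; assumption.
  - intros x [] []; tauto.
Qed.

Lemma Pr_le X Y : measurable P X -> measurable P Y -> (forall x, X x -> Y x) ->
  Pr P X <= Pr P Y.
Proof.
  intros HX HY Hsub. rewrite (Pr_split Y X HY HX).
  replace (fun x => X x /\ Y x) with X by (apply pred_ext; firstorder).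
  assert (0 <= Pr P (fun x => Y x /\ ~ X x))
    by (apply Pr_nonneg, measurable_diff; assumption).
  lra.
Qed.

Lemma measurable_bounded_union (n : nat) (A : nat -> Omega P -> Prop) :
  (forall i, (i < n)%nat -> measurable P (A i)) ->
  measurable P (fun x => exists i, (i < n)%nat /\ A i x).
Proof.
  intro HA. apply (measurable_cunion P (fun i x => (i < n)%nat /\ A i x)).
  intro i. destruct (Compare_dec.lt_dec i n) as [Hi | Hi].
  - replace (fun x => (i < n)%nat /\ A i x) with (A i)
      by (apply pred_ext; tauto).
    apply HA, Hi.
  - replace (fun x => (i < n)%nat /\ A i x) with (fun _ : Omega P => False)
      by (apply pred_ext; tauto).
    apply measurable_empty.
Qed.

End ProbabilityLemmas.

Lemma sum_lt_consecutive_pairs_le (b : nat -> R) (u : R) (n : nat) :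
  (forall i, (i < n)%nat -> b i <= u) ->
  (forall i, (S i < n)%nat -> b i + b (S i) <= u) ->
  sum_lt n b <= INR ((n + 1) / 2) * u.
Proof.
  revert n. fix IH 1. intros [|[|m]] Hone Htwo.
  - simpl. lra.
  - simpl. assert (b 0%nat <= u) by (apply Hone; lia). lra.
  - replace ((S (S m) + 1) / 2)%nat with (S ((m + 1) / 2)).
    2:{ replace (S (S m) + 1)%nat with (m + 1 + 1 * 2)%nat by lia.
        rewrite Nat.div_add by lia. lia. }
    rewrite S_INR. simpl sum_lt.
    assert (sum_lt m b <= INR ((m + 1) / 2) * u)
      by (apply IH; intros; [apply Hone | apply Htwo]; lia).
    assert (b m + b (S m) <= u) by (apply Htwo; lia).
    lra.
Qed.

Section PathEvents.
Variables (P : prob_space) (A : nat -> Omega P -> Prop).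

Definition path_diff (i : nat) : Omega P -> Prop :=
  match i with
  | 0 => A 0
  | S j => fun x => A (S j) x /\ ~ A j x
  end.

Lemma path_diff_sub i x : path_diff i x -> A i x.
Proof. destruct i; simpl; tauto. Qed.

Lemma path_diff_disjoint i x : path_diff i x -> path_diff (S i) x -> False.
Proof. intros Hi [_ Hn]. exact (Hn (path_diff_sub i x Hi)). Qed.

Variable n : nat.
Hypothesis HA : forall i, (i < n)%nat -> measurable P (A i).

Lemma measurable_path_diff i : (i < n)%nat -> measurable P (path_diff i).
Proof. destruct i; intro Hi; simpl; [| apply measurable_diff]; apply HA; lia. Qed.

Lemma sum_vertices_minus_edges_eq m : (S m <= n)%nat ->
  sum_lt (S m) (fun i => Pr P (A i))
  - sum_lt m (fun i => Pr P (fun x => A i x /\ A (S i) x))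
  = sum_lt (S m) (fun i => Pr P (path_diff i)).
Proof.
  induction m as [|m IH]; intro Hm; [simpl; ring |].
  change (sum_lt (S (S m)) ?f) with (sum_lt (S m) f + f (S m)); cbv beta.
  change (sum_lt (S m) (fun i => Pr P (fun x => A i x /\ A (S i) x))) with
    (sum_lt m (fun i => Pr P (fun x => A i x /\ A (S i) x))
     + Pr P (fun x => A m x /\ A (S m) x)).
  rewrite (Pr_split P (A (S m)) (A m)) by (apply HA; lia).
  rewrite <- IH by lia. simpl path_diff. ring.
Qed.

Lemma Pr_path_diff_pair_le i : (S i < n)%nat ->
  Pr P (path_diff i) + Pr P (path_diff (S i))
  <= Pr P (fun x => exists k, (k < n)%nat /\ A k x).
Proof.
  intro Hi.
  assert (Hmi : measurable P (path_diff i)) by (apply measurable_path_diff; lia).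
  assert (HmSi : measurable P (path_diff (S i)))
    by (apply measurable_path_diff; lia).
  rewrite <- Pr_disjoint_or by (assumption || exact (path_diff_disjoint i)).
  apply Pr_le; auto using measurable_or, measurable_bounded_union.
  intros x [Hx | Hx]; apply path_diff_sub in Hx;
    [exists i | exists (S i)]; split; auto; lia.
Qed.

End PathEvents.

Theorem mainTheorem6 (P : prob_space) (n : nat) (Hn : (1 <= n)%nat)
  (A : nat -> (Omega P -> Prop))
  (HA : forall i, (i < n)%nat -> measurable P (A i)) :
  Pr P (fun x => exists i, (i < n)%nat /\ A i x) >=
  / INR ((n + 1) / 2) *
  (sum_lt n (fun i => Pr P (A i))
   - sum_lt (n - 1) (fun i => Pr P (fun x => A i x /\ A (S i) x))).
Proof.
  set (U := fun x => exists i, (i < n)%nat /\ A i x).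
  assert (Hbracket := sum_vertices_minus_edges_eq P A n HA (n - 1) ltac:(lia)).
  replace (S (n - 1)) with n in Hbracket by lia.
  rewrite Hbracket.
  assert (Hsum : sum_lt n (fun i => Pr P (path_diff P A i))
                 <= INR ((n + 1) / 2) * Pr P U).
  { apply sum_lt_consecutive_pairs_le.
    - intros i Hi. apply Pr_le.
      + apply (measurable_path_diff P A n HA i Hi).
      + apply measurable_bounded_union, HA.
      + intros x Hx. exists i. split; [assumption | apply path_diff_sub, Hx].
    - apply Pr_path_diff_pair_le, HA. }
  assert (Hk : 1 <= INR ((n + 1) / 2)).
  { apply (le_INR 1). apply Nat.div_le_lower_bound; lia. }
  apply Rle_ge.
  apply (Rmult_le_reg_l (INR ((n + 1) / 2))); [lra |].
  rewrite <- Rmult_assoc, Rinv_r by lra. lra.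
Qed.
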